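(* Let $1\le r<n$, $d\le n$, and $\mu_0\ge 1$ be such that $d/(r\mu_0)$ is a positive integer, and let $m$ be a sampling budget. Let $\mathcal{X}$ be the set of $d\times n$ matrices of rank $r$ whose column space $U$ satisfies $\mu(U)\le\mu_0$. Let $\mathcal{Q}$ be the set of all probability distributions $q$ over lists of $m$ index pairs $(i,j)\in[d]\times[n]$, and $\mathcal{F}$ the set of all (possibly randomized) maps $f$ sending a list of indices $\Omega$ together with the values $X_\Omega$ of a matrix on those indices to a $d\times n$ matrix. Define $$R^\star=\inf_{f\in\mathcal{F}}\inf_{q\in\mathcal{Q}}\sup_{X\in\mathcal{X}}\Pr_{\Omega\sim q}\big[f(\Omega,X_\Omega)\ne X\big],$$ where the probability also accounts for randomness of $f$. Then $$R^\star\ \ge\ \frac12-\left\lceil\frac{m}{\left(1-\frac{r-1}{r\mu_0}\right)d}\right\rceil\frac{1}{2(n-r)}.$$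
   Context: For an $r$-dimensional subspace $U\subseteq\mathbb{R}^d$, its coherence is $\mu(U)=\frac{d}{r}\max_{i\in[d]}\|\mathcal{P}_U e_i\|_2^2$, where $\mathcal{P}_U$ is the orthogonal projection onto $U$. The sampling distribution $q$ is fixed before any entries are observed (passive, non-adaptive sampling). *)

From HB Require Import structures.
From mathcomp Require Import all_boot all_order all_algebra.
Set Implicit Arguments. Unset Strict Implicit. Unset Printing Implicit Defensive.
Import Order.TTheory GRing.Theory Num.Theory.
Local Open Scope ring_scope.

Section Defs.
Variable R : rcfType.

(* P (acting on column vectors of R^d) is the orthogonal projection onto the
   column space of X (= row space of X^T). *)
Definition is_orth_proj (d n : nat) (P : 'M[R]_d) (X : 'M[R]_(d, n)) : Prop :=
  P *m P = P /\ P^T = P /\ (P == X^T)%MS.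

Definition coherence_of_proj (d r : nat) (P : 'M[R]_d) : R :=
  d%:R / r%:R * \big[Num.max/0]_(i < d) \sum_(j < d) (P j i) ^+ 2.

Definition in_classX (d n r : nat) (mu0 : R) (X : 'M[R]_(d, n)) : Prop :=
  \rank X = r /\
  exists P : 'M[R]_d, is_orth_proj P X /\ coherence_of_proj r P <= mu0.

Definition is_distribution (d n m : nat)
    (q : {ffun m.-tuple ('I_d * 'I_n) -> R}) : Prop :=
  (forall Om, 0 <= q Om) /\ \sum_Om q Om = 1.

Definition observe (d n m : nat) (X : 'M[R]_(d, n)) (Om : m.-tuple ('I_d * 'I_n))
  : m.-tuple R := map_tuple (fun p => X p.1 p.2) Om.

(* A randomized estimator: for each input (Omega, X_Omega), f Om v M is the
   probability that the (randomized) output equals the matrix M, i.e. the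
   atom weights of the output law; they are nonnegative and any finite
   collection of distinct outputs has total weight <= 1. *)
Definition estimator (d n m : nat) :=
  m.-tuple ('I_d * 'I_n) -> m.-tuple R -> 'M[R]_(d, n) -> R.

Definition is_randomized_map (d n m : nat) (f : estimator d n m) : Prop :=
  forall Om v,
    (forall M, 0 <= f Om v M) /\
    (forall s : seq 'M[R]_(d, n), uniq s -> \sum_(M <- s) f Om v M <= 1).

Definition error_prob (d n m : nat) (f : estimator d n m)
    (q : {ffun m.-tuple ('I_d * 'I_n) -> R}) (X : 'M[R]_(d, n)) : R :=
  1 - \sum_Om q Om * f Om (observe X Om) X.

Definition is_ceil (x : R) (K : nat) : Prop := K%:R - 1 < x /\ x <= K%:R.

End Defs.

From HB Require Import structures.
From mathcomp Require Import all_boot all_order all_algebra.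
From mathcomp Require Import fingroup perm ring lra zify.
Set Implicit Arguments. Unset Strict Implicit. Unset Printing Implicit Defensive.
Import Order.TTheory GRing.Theory Num.Theory.
Local Open Scope ring_scope.

(* Split the d rows into r consecutive blocks of at least k = d / (r mu0)
   rows each and take for X the r block indicators as columns (the other
   columns being zero): the projection onto its column space has diagonal
   entries 1 / (block size) <= 1 / k, so its coherence is at most
   d / (r k) = mu0.  Flipping the sign of one entry (i0, t0) inside the
   column holding the block of i0 gives a second matrix of the class that
   agrees with X off (i0, t0); unless (i0, t0) is sampled an estimator sees
   the same data for both, so its two error probabilities add up to at
   least 1 - Pr[(i0, t0) is sampled].
   Since m samples cover at most m of the d n entries, some entry is
   sampled with probability at most m / (d n), which yields the bound
   1/2 - m / (2 d n); it implies the claimed one because m <= K d. *)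

Section Sampling.
Variables (R : rcfType) (T : finType) (m : nat).
Variable q : {ffun m.-tuple T -> R}.
Hypotheses (q_ge0 : forall Om, 0 <= q Om) (q_sum1 : \sum_Om q Om = 1).

Definition sample_prob (p : T) : R := \sum_Om q Om * (p \in (Om : seq T))%:R.

(* A list of [m] samples contains at most [m] distinct entries. *)
Lemma sum_sample_prob_le : \sum_p sample_prob p <= m%:R.
Proof.
rewrite exchange_big /=; apply: (@le_trans _ _ (\sum_Om q Om * m%:R)); last first.
  by rewrite -mulr_suml q_sum1 mul1r.
apply: ler_sum => Om _; rewrite -mulr_sumr ler_wpM2l //.
have distinct_le : (\sum_p (p \in (Om : seq T)) <= m)%N.
  rewrite -[X in (_ <= X)%N](size_tuple Om); apply: leq_trans (card_size Om).
  rewrite -sum1_card [X in (_ <= X)%N]big_mkcond /=.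
  by apply: leq_sum => p _; case: (_ \in _).
by rewrite -natr_sum ler_nat.
Qed.

Lemma exists_sample_prob_le (p0 : T) :
  exists p, sample_prob p * #|T|%:R <= m%:R.
Proof.
case: (@arg_minP _ _ _ p0 xpredT sample_prob isT) => p _ p_min.
exists p; apply: le_trans sum_sample_prob_le.
by rewrite mulr_natr -sumr_const; apply: ler_sum => p' _; apply: p_min.
Qed.

End Sampling.

Section TwoPoints.
Variables (R : rcfType) (d n m : nat).
Variables (q : {ffun m.-tuple ('I_d * 'I_n) -> R}) (f : estimator R d n m).
Hypotheses (q_distr : is_distribution q) (f_randomized : is_randomized_map f).
Variables (X1 X2 : 'M[R]_(d, n)) (p : 'I_d * 'I_n).
Hypotheses (X12 : X1 != X2) (X12_off_p : forall a b, (a, b) != p -> X1 a b = X2 a b).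

Lemma observe_eq_off (Om : m.-tuple ('I_d * 'I_n)) :
  p \notin (Om : seq _) -> observe X1 Om = observe X2 Om.
Proof.
move=> p_notin; apply: eq_from_tnth => i; rewrite !tnth_map.
rewrite X12_off_p // -surjective_pairing.
by apply: contraNneq p_notin => <-; apply: mem_tnth.
Qed.

(* Unless [p] is sampled, [f] sees the same data for [X1] and [X2] and must
   split its unit mass between them. *)
Lemma estimator_pair_le (Om : m.-tuple ('I_d * 'I_n)) :
  f Om (observe X1 Om) X1 + f Om (observe X2 Om) X2 <= 1 + (p \in (Om : seq _))%:R.
Proof.
have f_le1 v X : f Om v X <= 1.
  by have := (f_randomized Om v).2 [:: X] isT; rewrite big_seq1.
have [p_in|p_notin] := boolP (p \in (Om : seq _)); first exact: lerD.
rewrite addr0 (observe_eq_off p_notin).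
have := (f_randomized Om (observe X2 Om)).2 [:: X1; X2].
by rewrite /= inE X12 big_cons big_seq1; apply.
Qed.

Lemma error_prob_pair_ge :
  1 - sample_prob q p <= error_prob f q X1 + error_prob f q X2.
Proof.
have [q_ge0 q_sum1] := q_distr.
have sum_le : \sum_Om (q Om * f Om (observe X1 Om) X1 + q Om * f Om (observe X2 Om) X2)
    <= \sum_Om q Om + sample_prob q p.
  rewrite /sample_prob -big_split /=; apply: ler_sum => Om _.
  by rewrite -mulrDr -[X in _ <= X + _]mulr1 -mulrDr ler_wpM2l ?estimator_pair_le.
rewrite big_split q_sum1 /= in sum_le; rewrite /error_prob; lra.
Qed.

End TwoPoints.

Lemma proj_col_sqr_sum (R : rcfType) (d : nat) (P : 'M[R]_d) i :
  P *m P = P -> P^T = P -> \sum_j P j i ^+ 2 = P i i.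
Proof.
move=> PP PT; rewrite -[in RHS]PP mxE; apply: eq_bigr => j _.
by rewrite expr2 -[in X in X * _]PT mxE.
Qed.

Section FactoredClass.
Variables (R : rcfType) (d n r : nat).
Variables (G : 'M[R]_(d, r)) (C : 'M[R]_(r, n)) (c : 'rV[R]_r).
Hypotheses (GtG : G^T *m G = diag_mx c) (c_neq0 : forall j, c 0 j != 0).
Hypothesis CCt : C *m C^T = 1%:M.

Let D := diag_mx (map_mx GRing.inv c).
Let P := G *m D *m G^T.

Lemma diag_inv_mul : D *m diag_mx c = 1%:M /\ diag_mx c *m D = 1%:M.
Proof.
by split; apply/matrixP=> i j; rewrite mul_diag_mx !mxE;
  case: eqVneq => [->|_]; rewrite ?mulr0n ?mulr0 // !mulr1n (mulVf, mulfV).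
Qed.

Lemma mxrank_mul_orth : \rank (G *m C) = r.
Proof.
apply/eqP; rewrite eqn_leq (leq_trans (mxrankM_maxr _ _) (rank_leq_row _)) /=.
have left_inv : D *m G^T *m (G *m C) *m C^T = 1%:M.
  by rewrite -!mulmxA CCt mulmx1 GtG diag_inv_mul.1.
rewrite -{1}(mxrank1 R r) -left_inv.
exact: leq_trans (mxrankM_maxl _ _) (mxrankM_maxr _ _).
Qed.

Lemma is_orth_proj_mul_orth : is_orth_proj P (G *m C).
Proof.
have PG : G^T *m P = G^T.
  by rewrite /P !mulmxA GtG diag_inv_mul.2 mul1mx.
split; first by rewrite {1}/P -mulmxA PG.
split; first by rewrite /P !trmx_mul trmxK tr_diag_mx mulmxA.
apply/andP; split.
  have -> : P = (G *m D *m C) *m (G *m C)^T.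
    by rewrite trmx_mul mulmxA -(mulmxA _ C) CCt mulmx1.
  exact: submxMl.
have -> : (G *m C)^T = (G *m C)^T *m P by rewrite trmx_mul -mulmxA PG.
exact: submxMl.
Qed.

Lemma in_classX_mul_orth (mu0 b : R) :
  (forall i, \sum_j G i j ^+ 2 / c 0 j <= b) -> 0 <= b -> d%:R / r%:R * b <= mu0 ->
  in_classX r mu0 (G *m C).
Proof.
move=> leverage_le b_ge0 b_mu0; split; first exact: mxrank_mul_orth.
have [PP [PT _]] := is_orth_proj_mul_orth.
exists P; split; first exact: is_orth_proj_mul_orth.
apply: le_trans b_mu0; rewrite ler_wpM2l ?divr_ge0 //.
apply: bigmax_le => // i _; rewrite proj_col_sqr_sum //.
rewrite /P mxE (eq_bigr (fun j => G i j ^+ 2 / c 0 j)) ?leverage_le // => j _.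
by rewrite mul_mx_diag !mxE expr2 mulrAC.
Qed.

End FactoredClass.

Lemma rowsub1_mul_tr (R : rcfType) (p n : nat) (f : 'I_p -> 'I_n) :
  injective f -> rowsub f (1%:M : 'M[R]_n) *m (rowsub f 1%:M)^T = 1%:M.
Proof.
move=> f_inj; apply/matrixP => j j'; rewrite !mxE (bigD1 (f j)) //= big1.
  by rewrite !mxE eqxx mulr1n mul1r addr0 (inj_eq f_inj) eq_sym.
by move=> t ft; rewrite !mxE eq_sym (negbTE ft) mulr0n mul0r.
Qed.

Lemma sum_ord_range (N a b : nat) :
  (a <= b)%N -> (\sum_(i < N) (a <= i < b) = minn b N - minn a N)%N.
Proof.
move=> ab; elim: N => [|N IH]; first by rewrite big_ord0 !minn0.
by rewrite big_ord_recr /= IH; case: (leqP a N); case: (ltnP N b); lia.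
Qed.

Section HardInstance.
Variables (R : rcfType) (d r k n : nat).
Hypotheses (k_gt0 : (0 < k)%N) (blocks_fit : (r.+1 * k <= d)%N) (r_lt_n : (r < n)%N).

Definition blk (i : 'I_d) : 'I_r.+1 := inord (minn (i %/ k) r).

Definition blk_size (j : 'I_r.+1) : nat := \sum_(i < d) (blk i == j).

Lemma blk_range (i : 'I_d) (j : 'I_r.+1) : (j * k <= i < j * k + k)%N -> blk i = j.
Proof.
case/andP=> lo hi; apply/val_inj; rewrite /= inordK ?ltnS ?geq_minr //.
have -> : (i %/ k = j)%N.
  by apply/eqP; rewrite eqn_leq leq_divRL // -ltnS ltn_divLR // mulSn addnC hi lo.
by apply/minn_idPl; rewrite -ltnS.
Qed.

Lemma blk_size_ge j : (k <= blk_size j)%N.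
Proof.
have in_range : (\sum_(i < d) (j * k <= i < j * k + k) <= blk_size j)%N.
  apply: leq_sum => i _.
  by case: (boolP (j * k <= i < j * k + k)%N) => // /blk_range ->; rewrite eqxx.
apply: leq_trans in_range; rewrite sum_ord_range ?leq_addr //.
have : (j * k + k <= d)%N.
  by apply: leq_trans blocks_fit; rewrite -mulSnr leq_mul2r ltn_ord orbT.
lia.
Qed.

Definition hard_G (i0 : 'I_d) (b : bool) : 'M[R]_(d, r.+1) :=
  \matrix_(i, j) ((blk i == j)%:R * (-1) ^+ (b && (i == i0))).

Definition blk_sizes : 'rV[R]_r.+1 := \row_j (blk_size j)%:R.

Lemma hard_G_gram i0 b : (hard_G i0 b)^T *m hard_G i0 b = diag_mx blk_sizes.
Proof.
apply/matrixP => j j'; rewrite !mxE /blk_size natr_sum.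
have [<-|jj'] := eqVneq j j'; last first.
  rewrite mulr0n; apply: big1 => i _; rewrite !mxE.
  by case: (eqVneq (blk i) j) => [->|_] /=; rewrite ?(negbTE jj') /= ?mul0r ?mulr0.
rewrite mulr1n; apply: eq_bigr => i _.
by rewrite !mxE mulrACA -natrM mulnb andbb -expr2 sqrr_sign mulr1.
Qed.

Lemma hard_G_leverage i0 b i :
  \sum_j hard_G i0 b i j ^+ 2 / blk_sizes 0 j <= k%:R^-1.
Proof.
rewrite (bigD1 (blk i)) //= big1 => [|j /negbTE bj]; last first.
  by rewrite !mxE eq_sym bj mul0r expr0n mul0r.
rewrite !mxE eqxx mul1r sqrr_sign mul1r addr0 lef_pV2 ?ler_nat ?blk_size_ge //.
  by rewrite posrE ltr0n (leq_trans k_gt0 (blk_size_ge _)).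
by rewrite posrE ltr0n.
Qed.

Lemma blk_size_neq0 j : blk_sizes 0 j != 0.
Proof. by rewrite mxE pnatr_eq0 -lt0n (leq_trans k_gt0 (blk_size_ge _)). Qed.

Definition hard_col (i0 : 'I_d) (t0 : 'I_n) : 'I_r.+1 -> 'I_n :=
  tperm (widen_ord r_lt_n (blk i0)) t0 \o widen_ord r_lt_n.

Lemma hard_col_inj i0 t0 : injective (hard_col i0 t0).
Proof.
apply: inj_comp; first exact: perm_inj.
by move=> j j' /(congr1 val) /= /val_inj.
Qed.

Lemma hard_col_blk i0 t0 : hard_col i0 t0 (blk i0) = t0.
Proof. exact: tpermL. Qed.

Definition hard_instance (i0 : 'I_d) (t0 : 'I_n) (b : bool) : 'M[R]_(d, n) :=
  hard_G i0 b *m rowsub (hard_col i0 t0) 1%:M.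

Lemma hard_instance_in_classX (mu0 : R) i0 t0 b :
  d%:R / r.+1%:R / k%:R <= mu0 -> in_classX r.+1 mu0 (hard_instance i0 t0 b).
Proof.
apply: in_classX_mul_orth => //.
- exact: hard_G_gram.
- exact: blk_size_neq0.
- exact/rowsub1_mul_tr/hard_col_inj.
- exact: hard_G_leverage.
- by rewrite invr_ge0.
Qed.

Lemma hard_instance_at i0 t0 b : hard_instance i0 t0 b i0 t0 = (-1) ^+ b.
Proof.
rewrite !mxE (bigD1 (blk i0)) //= big1 => [|j j_blk]; rewrite /hard_G !mxE; last first.
  by rewrite eq_sym (negbTE j_blk) !mul0r.
by rewrite hard_col_blk !eqxx andbT mul1r mulr1 addr0.
Qed.

Lemma hard_instance_off i0 t0 a t : (a, t) != (i0, t0) ->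
  hard_instance i0 t0 true a t = hard_instance i0 t0 false a t.
Proof.
move=> at_off; rewrite !mxE; apply: eq_bigr => j _; rewrite /hard_G !mxE /=.
have [a_i0 | _] := eqVneq a i0; last by [].
rewrite {}a_i0 in at_off *.
have [<- | _] := eqVneq (blk i0) j; last by rewrite !mulr0n !mul0r.
rewrite hard_col_blk; have [t_t0 | _] := eqVneq t0 t; last by rewrite !mulr0.
by rewrite t_t0 eqxx in at_off.
Qed.

Lemma hard_instance_neq i0 t0 : hard_instance i0 t0 true != hard_instance i0 t0 false.
Proof.
apply/eqP => /(congr1 (fun X : 'M[R]_(d, n) => X i0 t0)).
by rewrite !hard_instance_at expr1 expr0 => h; lra.
Qed.

End HardInstance.

Lemma exists_hard_instance (R : rcfType) (d r k n m : nat) (mu0 : R)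
    (q : {ffun m.-tuple ('I_d * 'I_n) -> R}) (f : estimator R d n m) :
  (0 < k)%N -> (r.+1 * k <= d)%N -> (r < n)%N -> d%:R / r.+1%:R / k%:R <= mu0 ->
  is_distribution q -> is_randomized_map f ->
  exists2 X, in_classX r.+1 mu0 X & 1 - m%:R / (d * n)%:R <= 2 * error_prob f q X.
Proof.
move=> k_gt0 blocks_fit r_lt_n coherence q_distr f_rand.
have d_gt0 : (0 < d)%N by apply: leq_trans blocks_fit; rewrite muln_gt0 k_gt0.
have n_gt0 : (0 < n)%N by apply: leq_ltn_trans r_lt_n.
have [[i0 t0] Pr_le] :=
  exists_sample_prob_le q_distr.1 q_distr.2 (Ordinal d_gt0, Ordinal n_gt0).
rewrite card_prod !card_ord -ler_pdivlMr ?ltr0n ?muln_gt0 ?d_gt0 // in Pr_le.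
pose X := hard_instance R k r_lt_n i0 t0.
have pair := error_prob_pair_ge q_distr f_rand (hard_instance_neq R k r_lt_n i0 t0)
  (@hard_instance_off R d r k n r_lt_n i0 t0).
have X_class b : in_classX r.+1 mu0 (X b) by apply: hard_instance_in_classX.
have [le_ft | lt_tf] := lerP (error_prob f q (X false)) (error_prob f q (X true)).
  by exists (X true); [exact: X_class | lra].
by exists (X false); [exact: X_class | lra].
Qed.

Lemma block_params (R : realFieldType) (d r k : nat) (mu0 : R) :
  (0 < r)%N -> (0 < k)%N -> 1 <= mu0 -> d%:R / (r%:R * mu0) = k%:R ->
  (r * k <= d)%N /\ d%:R / r%:R / k%:R <= mu0.
Proof.
move=> r_gt0 k_gt0 mu0_ge1 d_k.
have rmu_gt0 : 0 < r%:R * mu0 by rewrite mulr_gt0 ?ltr0n // (lt_le_trans ltr01).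
have d_eq : d%:R = k%:R * (r%:R * mu0) by rewrite -d_k divfK ?gt_eqF.
split; first by rewrite -(ler_nat R) natrM d_eq mulrCA ler_pM2l ?ltr0n // ler_peMr ?ler0n.
suff -> : d%:R / r%:R / k%:R = mu0 by [].
by rewrite d_eq; field; rewrite !pnatr_eq0 -!lt0n k_gt0 r_gt0.
Qed.

Lemma sample_budget_le (R : realFieldType) (d r m K : nat) (mu0 : R) :
  (0 < r)%N -> (0 < d)%N -> 1 <= mu0 ->
  m%:R / ((1 - (r%:R - 1) / (r%:R * mu0)) * d%:R) <= K%:R -> m%:R <= K%:R * d%:R :> R.
Proof.
move=> r_gt0 d_gt0 mu0_ge1; set c := 1 - _ / _.
have rmu_gt0 : 0 < r%:R * mu0 by rewrite mulr_gt0 ?ltr0n // (lt_le_trans ltr01).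
have c_gt0 : 0 < c.
  rewrite subr_gt0 ltr_pdivrMr // mul1r.
  have : r%:R <= r%:R * mu0 :> R by rewrite ler_peMr ?ler0n.
  lra.
have c_le1 : c <= 1 by rewrite gerBl divr_ge0 ?(ltW rmu_gt0) // subr_ge0 ler1n.
rewrite ler_pdivrMr ?mulr_gt0 ?ltr0n // mulrCA => /le_trans; apply.
by rewrite ler_piMl ?mulr_ge0.
Qed.

Theorem theorem2 (R : rcfType) (d n r m : nat) (mu0 : R) :
  (1 <= r)%N -> (r < n)%N -> (d <= n)%N -> 1 <= mu0 ->
  (exists k : nat, (0 < k)%N /\ d%:R / (r%:R * mu0) = k%:R :> R) ->
  forall K : nat,
    is_ceil (m%:R / ((1 - (r%:R - 1) / (r%:R * mu0)) * d%:R)) K ->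
  forall (q : {ffun m.-tuple ('I_d * 'I_n) -> R}) (f : estimator R d n m),
    is_distribution q -> is_randomized_map f ->
  forall eps : R, 0 < eps ->
    exists X : 'M[R]_(d, n),
      in_classX r mu0 X /\
      1 / 2 - K%:R / (2 * (n - r)%:R) - eps < error_prob f q X.
Proof.
move=> r_gt0 r_lt_n _ mu0_ge1 [k [k_gt0 d_k]] K [_ m_le_K] q f q_distr f_rand eps eps_gt0.
have [blocks_fit coherence] := block_params r_gt0 k_gt0 mu0_ge1 d_k.
have d_gt0 : (0 < d)%N by apply: leq_trans blocks_fit; rewrite muln_gt0 r_gt0.
have m_le_Kd := sample_budget_le r_gt0 d_gt0 mu0_ge1 m_le_K.
case: r r_gt0 r_lt_n blocks_fit coherence {d_k m_le_K} => // r _ r_lt_n blocks_fit coherence.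
have [X X_class err_X] :=
  exists_hard_instance k_gt0 blocks_fit (ltnW r_lt_n) coherence q_distr f_rand.
exists X; split => //.
set N := (n - r.+1)%:R; have N_gt0 : 0 < N by rewrite ltr0n subn_gt0.
have miss_le : m%:R / (d * n)%:R <= K%:R / N.
  rewrite ler_pdivrMr ?ltr0n ?muln_gt0 ?d_gt0 ?(leq_ltn_trans _ r_lt_n) //.
  rewrite mulrAC ler_pdivlMr // natrM mulrA.
  apply: le_trans (_ : m%:R * n%:R <= _); last by rewrite ler_wpM2r.
  by rewrite ler_wpM2l ?ler_nat ?leq_subr.
have -> : K%:R / (2 * N) = K%:R / N / 2 by field; rewrite gt_eqF.
lra.
Qed.
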